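(* Let $G$ be an upward planar single-source digraph with maximum in- and outdegree at most two. Then in every upward planar embedding of $G$, no edge of $G$ is a bad edge with respect to the outer face.
   Context: A planar drawing of a digraph is upward if every edge $(u,v)$ is drawn as a curve strictly increasing in $y$ from $u$ to $v$; an upward planar embedding is the equivalence class of upward planar drawings with the same left-to-right orderings of incoming edges and of outgoing edges around each vertex. A single-source digraph has exactly one vertex of indegree zero. If a vertex has two incoming (outgoing) edges, these are its left and right incoming (outgoing) edges according to the embedding. An edge $e=(u,v)$ is bad with respect to face $f$ if either $e$ is the left outgoing edge of $u$ and the left incoming edge of $v$ and $f$ is the face to the right of $e$, or $e$ is the right outgoing edge of $u$ and the right incoming edge of $v$ and $f$ is the face to the left of $e$. *)

From mathcomp Require Import all_boot.
From Stdlib Require Import Reals.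
Set Implicit Arguments. Unset Strict Implicit. Unset Printing Implicit Defensive.

Definition outdeg (V : finType) (E : rel V) (u : V) : nat := #|[set w | E u w]|.
Definition indeg (V : finType) (E : rel V) (u : V) : nat := #|[set w | E w u]|.

Definition single_source (V : finType) (E : rel V) : Prop :=
  #|[set w | indeg E w == 0]| = 1.

Definition max_inout_deg_le2 (V : finType) (E : rel V) : Prop :=
  forall u, indeg E u <= 2 /\ outdeg E u <= 2.

Local Open Scope R_scope.

(* An upward planar drawing: vertices are points, every arc (u,v) is a
   continuous curve t |-> (cx u v t, cy u v t), t in [0,1], from u to v whose
   y-coordinate is strictly increasing; curves are internally disjoint and
   pass through no vertex other than their endpoints. *)
Record upward_planar_drawing (V : finType) (E : rel V) := UPD {
  pos : V -> R * R;
  cx : V -> V -> R -> R;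
  cy : V -> V -> R -> R;
  pos_inj : forall a b, pos a = pos b -> a = b;
  cx_cont : forall u v t, E u v -> continuity_pt (cx u v) t;
  cy_cont : forall u v t, E u v -> continuity_pt (cy u v) t;
  curve_start : forall u v, E u v -> (cx u v 0, cy u v 0) = pos u;
  curve_end : forall u v, E u v -> (cx u v 1, cy u v 1) = pos v;
  curve_upward : forall u v s t, E u v -> 0 <= s -> s < t -> t <= 1 ->
      cy u v s < cy u v t;
  curve_avoids_vertices : forall u v t w, E u v -> 0 < t < 1 ->
      (cx u v t, cy u v t) <> pos w;
  curves_disjoint : forall u v u' v' s t, E u v -> E u' v' ->
      (u, v) <> (u', v') -> 0 < s < 1 -> 0 < t < 1 ->
      (cx u v s, cy u v s) <> (cx u' v' t, cy u' v' t)
}.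

Definition upward_planar (V : finType) (E : rel V) : Prop :=
  exists D : upward_planar_drawing E, True.

Section Drawing.
Variables (V : finType) (E : rel V) (D : upward_planar_drawing E).

Definition on_drawing (z : R * R) : Prop :=
  (exists w, z = pos D w) \/
  (exists u v t, E u v /\ 0 <= t <= 1 /\ z = (cx D u v t, cy D u v t)).

(* z lies in the outer face: z is not on the drawing and the path-component
   of z in the complement of the drawing is unbounded. *)
Definition in_outer_face (z : R * R) : Prop :=
  ~ on_drawing z /\
  forall M : R, exists (px py : R -> R),
    (forall s, continuity_pt px s) /\ (forall s, continuity_pt py s) /\
    (px 0, py 0) = z /\
    (forall s, 0 <= s <= 1 -> ~ on_drawing (px s, py s)) /\
    M < Rabs (px 1) + Rabs (py 1).

Definition out_left_of (u v1 v2 : V) : Prop :=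
  exists delta, 0 < delta /\
  forall y s t, snd (pos D u) < y < snd (pos D u) + delta ->
    0 <= s <= 1 -> 0 <= t <= 1 -> cy D u v1 s = y -> cy D u v2 t = y ->
    cx D u v1 s < cx D u v2 t.

Definition in_left_of (v u1 u2 : V) : Prop :=
  exists delta, 0 < delta /\
  forall y s t, snd (pos D v) - delta < y < snd (pos D v) ->
    0 <= s <= 1 -> 0 <= t <= 1 -> cy D u1 v s = y -> cy D u2 v t = y ->
    cx D u1 v s < cx D u2 v t.

Definition left_outgoing (u v : V) : Prop :=
  E u v /\ outdeg E u = 2%nat /\ exists v', v' <> v /\ E u v' /\ out_left_of u v v'.
Definition right_outgoing (u v : V) : Prop :=
  E u v /\ outdeg E u = 2%nat /\ exists v', v' <> v /\ E u v' /\ out_left_of u v' v.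
Definition left_incoming (u v : V) : Prop :=
  E u v /\ indeg E v = 2%nat /\ exists u', u' <> u /\ E u' v /\ in_left_of v u u'.
Definition right_incoming (u v : V) : Prop :=
  E u v /\ indeg E v = 2%nat /\ exists u', u' <> u /\ E u' v /\ in_left_of v u' u.

(* The face to the right (resp. left) of arc (u,v) is the outer face:
   points immediately to the right (left) of an interior point of the arc lie
   in the outer face. (Arcs go upward, so "right" is the +x direction.) *)
Definition right_face_outer (u v : V) : Prop :=
  exists t delta, 0 < t < 1 /\ 0 < delta /\
  forall eps, 0 < eps < delta -> in_outer_face (cx D u v t + eps, cy D u v t).
Definition left_face_outer (u v : V) : Prop :=
  exists t delta, 0 < t < 1 /\ 0 < delta /\
  forall eps, 0 < eps < delta -> in_outer_face (cx D u v t - eps, cy D u v t).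

Definition bad_wrt_outer (u v : V) : Prop :=
  (left_outgoing u v /\ left_incoming u v /\ right_face_outer u v) \/
  (right_outgoing u v /\ right_incoming u v /\ left_face_outer u v).

End Drawing.

From Pilot Require Import Defs.
From Stdlib Require Import Reals Lra ClassicalEpsilon.
From mathcomp Require Import all_boot.
Set Implicit Arguments. Unset Strict Implicit. Unset Printing Implicit Defensive.
Local Open Scope R_scope.

(* Let u -> v be a bad edge, say the left incoming arc of v whose right face
   is the outer face (the other case is the mirror image, handled by a sign
   sg = +1 / -1 on x-coordinates), and let u' -> v be the other incoming arc
   of v, which arrives to the right of u -> v.  Since G has a single source
   and the drawing is upward, every vertex is reachable from the source; the
   highest common vertex c of two source paths to u and u' yields two paths
   c ~> u -> v and c ~> u' -> v sharing only c and v.  Their drawings are two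
   y-monotone curves with common ends and disjoint interiors, i.e. graphs
   x = X1(y) < X2(y) over (y(c), y(v)), and they bound a "bigon".  Points
   immediately right of u -> v lie inside it, and a path avoiding the drawing
   cannot leave it (connectedness of [0, 1]), so it stays bounded: the right
   face of u -> v is not the outer face. *)

Lemma continuity_pt_eps (f : R -> R) x : continuity_pt f x ->
  forall eps, 0 < eps ->
  exists d, 0 < d /\ forall y, Rabs (y - x) < d -> Rabs (f y - f x) < eps.
Proof.
rewrite /continuity_pt /continue_in /limit1_in /limit_in /= /R_dist.
move=> Hf eps Heps; have [d [Hd Hfd]] := Hf eps Heps; exists d; split => // y Hy.
have [->|Hne] := Req_dec y x; first by rewrite Rminus_diag Rabs_R0.
by apply: Hfd; split; [split; [exact I | by auto] | exact Hy].
Qed.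

Lemma eps_continuity_pt (f : R -> R) x :
  (forall eps, 0 < eps ->
   exists d, 0 < d /\ forall y, Rabs (y - x) < d -> Rabs (f y - f x) < eps) ->
  continuity_pt f x.
Proof.
rewrite /continuity_pt /continue_in /limit1_in /limit_in /= /R_dist.
move=> Hf eps Heps; have [d [Hd Hfd]] := Hf eps Heps.
by exists d; split => // y [_ Hy]; exact: Hfd.
Qed.

Lemma continuity_pt_pos_near (f : R -> R) x : continuity_pt f x -> 0 < f x ->
  exists d, 0 < d /\ forall y, Rabs (y - x) < d -> 0 < f y.
Proof.
move=> Hf Hpos; have [d [Hd Hfd]] := continuity_pt_eps Hf Hpos.
by exists d; split => // y /Hfd /Rabs_def2 [_ ?]; lra.
Qed.

Lemma continuity_pt_limit_nonneg (f : R -> R) x : continuity_pt f x ->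
  (forall d, 0 < d -> exists y, Rabs (y - x) < d /\ 0 < f y) -> 0 <= f x.
Proof.
move=> Hf Hclose; have [//|/Rnot_le_lt Hneg] := Rle_dec 0 (f x).
have [d [Hd Hfd]] := continuity_pt_eps Hf (ltac:(lra) : 0 < - f x).
have [y [/Hfd /Rabs_def2 [? _] ?]] := Hclose d Hd; lra.
Qed.

Lemma continuity_glue (f g : R -> R) : continuity f -> continuity g -> f 1 = g 0 ->
  continuity (fun s => if Rle_dec s 1 then f s else g (s - 1)).
Proof.
move=> Hf Hg Hfg x; apply: eps_continuity_pt => eps Heps.
have [d1 [Hd1 Hf1]] := continuity_pt_eps (Hf x) Heps.
have [d2 [Hd2 Hg2]] := continuity_pt_eps (Hg (x - 1)) Heps.
case: (Rtotal_order x 1) => [Hx|[Hx|Hx]].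
- exists (Rmin d1 (1 - x)); split; first by apply: Rmin_pos; lra.
  move=> y Hy; have := Rmin_l d1 (1 - x); have := Rmin_r d1 (1 - x).
  move/Rabs_def2: (Hy) => [? ?] ? ?.
  case: Rle_dec => ?; case: Rle_dec => ?; try lra.
  by apply: Hf1; apply: Rabs_def1; lra.
- subst x; rewrite Rminus_diag in Hg2.
  exists (Rmin d1 d2); split; first exact: Rmin_pos.
  move=> y Hy; have := Rmin_l d1 d2; have := Rmin_r d1 d2.
  move/Rabs_def2: (Hy) => [? ?] ? ?.
  case: Rle_dec => ?; case: Rle_dec => ?; try lra.
  + by apply: Hf1; apply: Rabs_def1; lra.
  + by rewrite Hfg; apply: Hg2; apply: Rabs_def1; lra.
- exists (Rmin d2 (x - 1)); split; first by apply: Rmin_pos; lra.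
  move=> y Hy; have := Rmin_l d2 (x - 1); have := Rmin_r d2 (x - 1).
  move/Rabs_def2: (Hy) => [? ?] ? ?.
  case: Rle_dec => ?; case: Rle_dec => ?; try lra.
  by apply: Hg2; apply: Rabs_def1; lra.
Qed.

(* Connectedness of [0,1]: a property that holds at 0, is open, and is closed
   in [0,1] holds at 1.  Proved with the supremum of the initial segment on
   which the property holds. *)
Lemma unit_interval_connected (P : R -> Prop) : P 0 ->
  (forall r0, P r0 -> exists d, 0 < d /\ forall r, Rabs (r - r0) < d -> P r) ->
  (forall r0, 0 <= r0 <= 1 ->
     (forall d, 0 < d -> exists r, Rabs (r - r0) < d /\ P r) -> P r0) ->
  P 1.
Proof.
move=> P0 Popen Pclosed.
pose S r := 0 <= r <= 1 /\ forall r', 0 <= r' <= r -> P r'.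
have S0 : S 0 by split; [lra | move=> r' ?; have -> : r' = 0 by lra].
have Sbound : bound S by exists 1 => r [[_ ?] _].
have [sm [Hub Hlub]] := @completeness S Sbound (ex_intro _ 0 S0).
have sm0 : 0 <= sm by exact: Hub.
have sm1 : sm <= 1 by apply: Hlub => r [[_ ?] _].
have below r : 0 <= r < sm -> P r.
  move=> Hr; have [[s [[_ Hs] Hrs]]|Hnone] := classic (exists s, S s /\ r <= s).
    by apply: Hs; lra.
  suff : sm <= r by lra.
  apply: Hlub => s Ss; have [//|/Rnot_le_lt ?] := Rle_dec s r.
  by case: Hnone; exists s; split => //; lra.
have Psm : P sm.
  have [Hpos|<-] := Rle_lt_or_eq_dec _ _ sm0; last exact: P0.
  apply: Pclosed; first lra.
  move=> d Hd; exists (Rmax 0 (sm - d / 2)).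
  by rewrite /Rmax; case: Rle_dec => ?; (split; [apply: Rabs_def1; lra | apply: below; lra]).
have [d [Hd Hnear]] := Popen _ Psm.
have [Hlt|<- //] := Rle_lt_or_eq_dec _ _ sm1.
have Sbeyond : S (Rmin 1 (sm + d / 2)).
  split; first by rewrite /Rmin; case: Rle_dec => ?; lra.
  move=> r' Hr'; have [?|?] := Rlt_le_dec r' sm; first by apply: below; lra.
  by apply: Hnear; apply: Rabs_def1; move: Hr'; rewrite /Rmin; case: Rle_dec => ?; lra.
by have := Hub _ Sbeyond; rewrite /Rmin; case: Rle_dec => ?; lra.
Qed.

Definition increasing_on (g : R -> R) (T : R) : Prop :=
  forall s t, 0 <= s -> s < t -> t <= T -> g s < g t.

Lemma increasing_on_le g T s t : increasing_on g T ->
  0 <= s -> s <= t -> t <= T -> g s <= g t.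
Proof.
move=> Hg Hs Hst Ht; have [?|->] := Rle_lt_or_eq_dec _ _ Hst; last exact: Rle_refl.
by left; apply: Hg.
Qed.

Lemma increasing_on_inj g T s t : increasing_on g T ->
  0 <= s <= T -> 0 <= t <= T -> g s = g t -> s = t.
Proof.
move=> Hg [? ?] [? ?] Hst; case: (Rtotal_order s t) => [h|[//|h]].
- by have := Hg s t ltac:(lra) h ltac:(lra); lra.
- by have := Hg t s ltac:(lra) h ltac:(lra); lra.
Qed.

Lemma increasing_on_inverse_cont g T t0 eps : increasing_on g T ->
  0 <= t0 <= T -> 0 < eps ->
  exists d, 0 < d /\
    forall t, 0 <= t <= T -> Rabs (g t - g t0) < d -> Rabs (t - t0) < eps.
Proof.
move=> Hg [Ht0 HtT] Heps.
set dl := if Rlt_dec 0 (t0 - eps / 2) then g t0 - g (t0 - eps / 2) else 1.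
set dr := if Rlt_dec (t0 + eps / 2) T then g (t0 + eps / 2) - g t0 else 1.
have Hdl : 0 < dl.
  rewrite /dl; case: Rlt_dec => h /=; last lra.
  by have := Hg (t0 - eps / 2) t0 ltac:(lra) ltac:(lra) ltac:(lra); lra.
have Hdr : 0 < dr.
  rewrite /dr; case: Rlt_dec => h /=; last lra.
  by have := Hg t0 (t0 + eps / 2) ltac:(lra) ltac:(lra) ltac:(lra); lra.
exists (Rmin dl dr); split; first exact: Rmin_pos.
move=> t [? ?] /Rabs_def2 [? ?]; have := Rmin_l dl dr; have := Rmin_r dl dr.
move=> ? ?; apply: Rabs_def1.
- have [//|/Rnot_lt_le ?] := Rlt_dec (t - t0) eps.
  have Edr : dr = g (t0 + eps / 2) - g t0 by rewrite /dr; case: Rlt_dec => ? /=; lra.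
  by have := Hg (t0 + eps / 2) t ltac:(lra) ltac:(lra) ltac:(lra); lra.
- have [//|/Rnot_lt_le ?] := Rlt_dec (- eps) (t - t0).
  have Edl : dl = g t0 - g (t0 - eps / 2) by rewrite /dl; case: Rlt_dec => ? /=; lra.
  by have := Hg t (t0 - eps / 2) ltac:(lra) ltac:(lra) ltac:(lra); lra.
Qed.

(* Projection of b onto the interval [lo, hi]; it makes the inverse of an
   increasing function total in [monotone_curve_graph]. *)
Definition clamp (lo hi b : R) : R := Rmax lo (Rmin hi b).

Lemma clamp_in lo hi b : lo <= hi -> lo <= clamp lo hi b <= hi.
Proof. by rewrite /clamp /Rmax /Rmin; do 2 case: Rle_dec; lra. Qed.

Lemma clamp_id lo hi b : lo <= b <= hi -> clamp lo hi b = b.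
Proof. by rewrite /clamp /Rmax /Rmin; do 2 case: Rle_dec; lra. Qed.

Lemma clamp_lipschitz lo hi b b' : lo <= hi ->
  Rabs (clamp lo hi b - clamp lo hi b') <= Rabs (b - b').
Proof.
move=> ?; rewrite /clamp /Rmax /Rmin.
case: (Rle_dec hi b) => ?; case: (Rle_dec hi b') => ?; repeat case: Rle_dec => ?.
all: rewrite /Rabs; repeat match goal with |- context [Rcase_abs ?a] => case: (Rcase_abs a) => ? end.
all: lra.
Qed.

Lemma monotone_curve_graph gx gy T : 0 <= T ->
  continuity gx -> continuity gy -> increasing_on gy T ->
  exists X : R -> R, continuity X /\
   (forall b, gy 0 <= b <= gy T ->
      exists t, 0 <= t <= T /\ gy t = b /\ X b = gx t) /\
   (forall t, 0 <= t <= T -> X (gy t) = gx t).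
Proof.
(* X b := gx (ht b), where ht b is a parameter at which gy takes the value b
   (clamped to [gy 0, gy T]); ht is continuous as an inverse of gy. *)
move=> HT Hx Hy Hincr.
have Hle : gy 0 <= gy T by apply: (increasing_on_le Hincr); lra.
have onto b : gy 0 <= b <= gy T -> exists t, 0 <= t <= T /\ gy t = b.
  move=> [? ?].
  have Hc : continuity (fun t => gy t - b).
    by apply: continuity_minus => //; apply: continuity_const => ? ?.
  have [t [? ?]] := @IVT_cor (fun t => gy t - b) 0 T Hc HT ltac:(nra).
  by exists t; split => //; lra.
pose P b t := 0 <= t <= T /\ gy t = clamp (gy 0) (gy T) b.
pose ht b := epsilon (inhabits 0) (P b).
have Hht b : P b (ht b).
  by apply: (epsilon_spec (inhabits 0) (P b)); exact: onto (clamp_in b Hle).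
exists (fun b => gx (ht b)); split; [|split].
- move=> b0; apply: eps_continuity_pt => eps Heps.
  have [Ht0 Hg0] := Hht b0.
  have [d1 [Hd1 H1]] := continuity_pt_eps (Hx (ht b0)) Heps.
  have [d2 [Hd2 H2]] := increasing_on_inverse_cont Hincr Ht0 Hd1.
  exists d2; split => // b Hb; have [Ht Hg] := Hht b.
  apply: H1; apply: H2 => //; rewrite Hg Hg0.
  exact: Rle_lt_trans (clamp_lipschitz _ _ Hle) Hb.
- move=> b Hb; exists (ht b); have [Ht Hg] := Hht b.
  by rewrite Hg clamp_id.
- move=> t Ht; have [Ht' Hg] := Hht (gy t).
  rewrite clamp_id in Hg; last by split; apply: (increasing_on_le Hincr); lra.
  by rewrite (increasing_on_inj Hincr Ht' Ht Hg).
Qed.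

Lemma graphs_ordered (X1 X2 : R -> R) Y0 Y1 :
  continuity X1 -> continuity X2 ->
  (forall y, Y0 < y < Y1 -> X1 y <> X2 y) ->
  (exists d, 0 < d /\ forall y, Y1 - d < y < Y1 -> X1 y < X2 y) ->
  forall y, Y0 < y < Y1 -> X1 y < X2 y.
Proof.
move=> C1 C2 Hneq [d [Hd Htop]] y Hy.
set y' := Rmax y (Y1 - d / 2).
have Hy' : y <= y' /\ Y1 - d / 2 <= y' /\ y' < Y1.
  by rewrite /y' /Rmax; case: Rle_dec => ?; lra.
have Hlt' : X1 y' < X2 y' by apply: Htop; lra.
case: (Rtotal_order (X1 y) (X2 y)) => [//|[Heq|Hgt]]; first by case: (Hneq y Hy Heq).
have Hc : continuity (fun z => X2 z - X1 z) by exact: continuity_minus.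
have [z [? ?]] := @IVT_cor (fun z => X2 z - X1 z) y y' Hc (proj1 Hy') ltac:(nra).
by case: (Hneq z); lra.
Qed.

Section StripTrap.
Variables (X1 X2 : R -> R) (Y0 Y1 : R) (Wall : R -> R -> Prop).
Hypotheses (C1 : continuity X1) (C2 : continuity X2).
Hypotheses (pinch0 : X1 Y0 = X2 Y0) (pinch1 : X1 Y1 = X2 Y1).
Hypothesis wall_graphs : forall y, Y0 <= y <= Y1 -> Wall (X1 y) y /\ Wall (X2 y) y.

Definition in_strip (x y : R) : Prop := Y0 < y < Y1 /\ X1 y < x < X2 y.

Section StripPath.
Variables (px py : R -> R).
Hypotheses (Cx : continuity px) (Cy : continuity py).

Lemma strip_gaps_cont :
  [/\ continuity (fun r => py r - Y0), continuity (fun r => Y1 - py r),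
      continuity (fun r => px r - X1 (py r)) & continuity (fun r => X2 (py r) - px r)].
Proof.
have Cconst c : continuity (fun _ => c) by apply: continuity_const => ? ?.
split; apply: continuity_minus => //; exact: continuity_comp.
Qed.

Lemma strip_path_open r0 : in_strip (px r0) (py r0) ->
  exists d, 0 < d /\ forall r, Rabs (r - r0) < d -> in_strip (px r) (py r).
Proof.
move=> [[? ?] [? ?]]; have [Cf1 Cf2 Cf3 Cf4] := strip_gaps_cont.
have [d1 [? H1]] := continuity_pt_pos_near (Cf1 r0) ltac:(lra).
have [d2 [? H2]] := continuity_pt_pos_near (Cf2 r0) ltac:(lra).
have [d3 [? H3]] := continuity_pt_pos_near (Cf3 r0) ltac:(lra).
have [d4 [? H4]] := continuity_pt_pos_near (Cf4 r0) ltac:(lra).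
exists (Rmin (Rmin d1 d2) (Rmin d3 d4)); split; first by do 2 apply: Rmin_pos.
move=> r Hr.
have := Rmin_l (Rmin d1 d2) (Rmin d3 d4); have := Rmin_r (Rmin d1 d2) (Rmin d3 d4).
have := Rmin_l d1 d2; have := Rmin_r d1 d2; have := Rmin_l d3 d4; have := Rmin_r d3 d4.
move=> ? ? ? ? ? ?.
have := H1 r ltac:(lra); have := H2 r ltac:(lra).
have := H3 r ltac:(lra); have := H4 r ltac:(lra).
rewrite /in_strip; lra.
Qed.

(* Off the wall, a limit of times spent in the strip is a time in the strip:
   the closure of the strip only adds points of the wall. *)
Lemma strip_path_closed r0 : ~ Wall (px r0) (py r0) ->
  (forall d, 0 < d -> exists r, Rabs (r - r0) < d /\ in_strip (px r) (py r)) ->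
  in_strip (px r0) (py r0).
Proof.
move=> Hwall Hclose; have [Cf1 Cf2 Cf3 Cf4] := strip_gaps_cont.
have limit_pos f : continuity f -> (forall r, in_strip (px r) (py r) -> 0 < f r) ->
    0 <= f r0.
  move=> Cf Hf; apply: (continuity_pt_limit_nonneg (Cf r0)) => d Hd.
  by have [r [? Hr]] := Hclose d Hd; exists r; split => //; exact: Hf.
have g1 := limit_pos _ Cf1 ltac:(move=> r [[? ?] _]; lra).
have g2 := limit_pos _ Cf2 ltac:(move=> r [[? ?] _]; lra).
have g3 := limit_pos _ Cf3 ltac:(move=> r [_ [? ?]]; lra).
have g4 := limit_pos _ Cf4 ltac:(move=> r [_ [? ?]]; lra).
have [h1|e1] := Rle_lt_or_eq_dec _ _ g1; last first.
  case: Hwall; have -> : py r0 = Y0 by lra.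
  have -> : px r0 = X1 Y0 by rewrite (_ : py r0 = Y0) in g3 g4; lra.
  by apply: (proj1 (wall_graphs _)); lra.
have [h2|e2] := Rle_lt_or_eq_dec _ _ g2; last first.
  case: Hwall; have -> : py r0 = Y1 by lra.
  have -> : px r0 = X1 Y1 by rewrite (_ : py r0 = Y1) in g3 g4; lra.
  by apply: (proj1 (wall_graphs _)); lra.
have [h3|e3] := Rle_lt_or_eq_dec _ _ g3; last first.
  by case: Hwall; rewrite (_ : px r0 = X1 (py r0)); [apply: (proj1 (wall_graphs _)) |]; lra.
have [h4|e4] := Rle_lt_or_eq_dec _ _ g4; last first.
  by case: Hwall; rewrite (_ : px r0 = X2 (py r0)); [apply: (proj2 (wall_graphs _)) |]; lra.
rewrite /in_strip; lra.
Qed.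

Lemma strip_trap : in_strip (px 0) (py 0) ->
  (forall r, 0 <= r <= 1 -> ~ Wall (px r) (py r)) ->
  in_strip (px 1) (py 1).
Proof.
move=> Hstart Havoid.
apply: (unit_interval_connected (P := fun r => in_strip (px r) (py r))) => //.
- exact: strip_path_open.
- by move=> r0 Hr0; apply: strip_path_closed; exact: Havoid.
Qed.

End StripPath.

End StripTrap.

Section BigonTrap.
Variables (gx1 gy1 gx2 gy2 : R -> R) (T1 T2 : R) (Wall : R -> R -> Prop).
Hypotheses (HT1 : 0 < T1) (HT2 : 0 < T2).
Hypotheses (Cx1 : continuity gx1) (Cy1 : continuity gy1).
Hypotheses (Cx2 : continuity gx2) (Cy2 : continuity gy2).
Hypotheses (I1 : increasing_on gy1 T1) (I2 : increasing_on gy2 T2).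
Hypotheses (start_x : gx1 0 = gx2 0) (start_y : gy1 0 = gy2 0).
Hypotheses (end_x : gx1 T1 = gx2 T2) (end_y : gy1 T1 = gy2 T2).
Hypothesis interiors_disjoint : forall s t, 0 < s < T1 -> 0 < t < T2 ->
  gx1 s = gx2 t -> gy1 s = gy2 t -> False.
Hypothesis left_below_top : exists d, 0 < d /\
  forall s t, 0 <= s <= T1 -> 0 <= t <= T2 ->
  gy1 T1 - d < gy1 s < gy1 T1 -> gy2 t = gy1 s -> gx1 s < gx2 t.
Hypothesis wall1 : forall t, 0 <= t <= T1 -> Wall (gx1 t) (gy1 t).
Hypothesis wall2 : forall t, 0 <= t <= T2 -> Wall (gx2 t) (gy2 t).

Lemma bigon_as_strip : exists X1 X2 : R -> R,
  continuity X1 /\ continuity X2 /\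
  X1 (gy1 0) = X2 (gy1 0) /\ X1 (gy1 T1) = X2 (gy1 T1) /\
  (forall t, 0 <= t <= T1 -> X1 (gy1 t) = gx1 t) /\
  (forall y, gy1 0 <= y <= gy1 T1 -> exists t1 t2, 0 <= t1 <= T1 /\ 0 <= t2 <= T2 /\
     gy1 t1 = y /\ gy2 t2 = y /\ X1 y = gx1 t1 /\ X2 y = gx2 t2) /\
  (forall y, gy1 0 < y < gy1 T1 -> X1 y < X2 y).
Proof.
have [X1 [CX1 [onto1 graph1]]] := monotone_curve_graph (Rlt_le _ _ HT1) Cx1 Cy1 I1.
have [X2 [CX2 [onto2 graph2]]] := monotone_curve_graph (Rlt_le _ _ HT2) Cx2 Cy2 I2.
set Y0 := gy1 0; set Y1 := gy1 T1.
have HY : Y0 < Y1 by apply: I1; lra.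
have onto1' b : Y0 <= b <= Y1 -> exists t, 0 <= t <= T1 /\ gy1 t = b /\ X1 b = gx1 t.
  exact: onto1.
have onto2' b : Y0 <= b <= Y1 -> exists t, 0 <= t <= T2 /\ gy2 t = b /\ X2 b = gx2 t.
  by move=> Hb; apply: onto2; rewrite -start_y -end_y.
have interior1 t : 0 <= t <= T1 -> Y0 < gy1 t < Y1 -> 0 < t < T1.
  move=> Ht Hy; have ? : t <> 0 by move=> e; rewrite e /Y0 in Hy; lra.
  have ? : t <> T1 by move=> e; rewrite e /Y1 in Hy; lra.
  lra.
have interior2 t : 0 <= t <= T2 -> Y0 < gy2 t < Y1 -> 0 < t < T2.
  move=> Ht Hy; have ? : t <> 0 by move=> e; rewrite e /Y0 start_y in Hy; lra.
  have ? : t <> T2 by move=> e; rewrite e /Y1 end_y in Hy; lra.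
  lra.
have graphs_disjoint b : Y0 < b < Y1 -> X1 b <> X2 b.
  move=> Hb HX; have [t1 [Ht1 [g1 x1]]] := onto1' b ltac:(lra).
  have [t2 [Ht2 [g2 x2]]] := onto2' b ltac:(lra).
  apply: (interiors_disjoint (s := t1) (t := t2)); last by rewrite g1 g2.
  - by apply: interior1; rewrite ?g1.
  - by apply: interior2; rewrite ?g2.
  - by rewrite -x1 -x2.
have graphs_top : exists d, 0 < d /\ forall b, Y1 - d < b < Y1 -> X1 b < X2 b.
  have [d [Hd Hleft]] := left_below_top.
  exists (Rmin d (Y1 - Y0)); split; first by apply: Rmin_pos; lra.
  move=> b Hb; have := Rmin_l d (Y1 - Y0); have := Rmin_r d (Y1 - Y0); move=> ? ?.
  have [t1 [Ht1 [g1 ->]]] := onto1' b ltac:(lra).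
  have [t2 [Ht2 [g2 ->]]] := onto2' b ltac:(lra).
  by apply: Hleft => //; rewrite ?g1 ?g2 -/Y1 //; lra.
exists X1, X2; do 2 split => //.
split; first by rewrite /Y0 graph1 ?start_y ?graph2 ?start_x //; lra.
split; first by rewrite /Y1 graph1 ?end_y ?graph2 ?end_x //; lra.
split=> //; split=> [y Hy|]; last exact: graphs_ordered.
have [t1 [Ht1 [g1 x1]]] := onto1' y Hy; have [t2 [Ht2 [g2 x2]]] := onto2' y Hy.
by exists t1, t2.
Qed.

(* Points immediately right of an interior point of arc 1 are inside the
   bigon, so every path from such a point avoiding the arcs ends horizontally
   between the two arcs. *)
Lemma bigon_trap s0 : 0 < s0 < T1 -> exists e0, 0 < e0 /\
  forall eps, 0 < eps < e0 ->
  forall px py : R -> R, continuity px -> continuity py ->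
    px 0 = gx1 s0 + eps -> py 0 = gy1 s0 ->
    (forall r, 0 <= r <= 1 -> ~ Wall (px r) (py r)) ->
    exists t1 t2, 0 <= t1 <= T1 /\ 0 <= t2 <= T2 /\
      gy1 t1 = py 1 /\ gx1 t1 < px 1 < gx2 t2.
Proof.
move=> Hs0.
have [X1 [X2 [CX1 [CX2 [pinch0 [pinch1 [graph1 [onto graphs_lt]]]]]]]] := bigon_as_strip.
have wall_graphs y : gy1 0 <= y <= gy1 T1 -> Wall (X1 y) y /\ Wall (X2 y) y.
  move=> Hy; have [t1 [t2 [Ht1 [Ht2 [<- [g2 [-> ->]]]]]]] := onto y Hy.
  by split; [exact: wall1 | rewrite -g2; exact: wall2].
have Hb0 : gy1 0 < gy1 s0 < gy1 T1 by split; apply: I1; lra.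
exists (X2 (gy1 s0) - X1 (gy1 s0)); split; first by have := graphs_lt _ Hb0; lra.
move=> eps Heps px py Cpx Cpy Hpx0 Hpy0 Havoid.
have Hstart : in_strip X1 X2 (gy1 0) (gy1 T1) (px 0) (py 0).
  by rewrite /in_strip Hpx0 Hpy0 graph1 in Heps *; lra.
have [Hy1 Hx1] := strip_trap CX1 CX2 pinch0 pinch1 wall_graphs Cpx Cpy Hstart Havoid.
have [t1 [t2 [Ht1 [Ht2 [g1 [g2 [x1 x2]]]]]]] := onto (py 1) ltac:(lra).
by exists t1, t2; rewrite -x1 -x2.
Qed.

End BigonTrap.

Lemma seq_argmax (T : eqType) (f : T -> R) (l : seq T) x : x \in l ->
  exists c, c \in l /\ forall w, w \in l -> f w <= f c.
Proof.
elim: l x => [|y l IH] x //= _; case: l IH => [|z l] IH.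
  exists y; split=> [|w]; first exact: mem_head.
  by rewrite mem_seq1 => /eqP ->; lra.
have [c [Hc Hmax]] := IH z (mem_head z l).
have [Hyc|Hcy] := Rle_dec (f y) (f c).
  exists c; split; first by rewrite in_cons Hc orbT.
  by move=> w; rewrite in_cons => /orP [/eqP ->|/Hmax].
exists y; split; first exact: mem_head.
by move=> w; rewrite in_cons => /orP [/eqP ->|/Hmax]; lra.
Qed.

Lemma suffix_path (T : eqType) (e : rel T) c x p : c \in x :: p -> path e x p ->
  exists q, path e c q /\ last c q = last x p /\ {subset c :: q <= x :: p}.
Proof.
elim: p x => [|y p IH] x.
  by rewrite mem_seq1 => /eqP -> _; exists [::]; split; [|split] => // w.
rewrite in_cons => /orP [/eqP ->|Hc] Hp; first by exists (y :: p); split; [|split] => // w.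
move: Hp => /= /andP [_ Hp].
have [q [Hq [Hlast Hsub]]] := IH y Hc Hp.
by exists q; split; [|split] => // w /Hsub Hw; rewrite in_cons Hw orbT.
Qed.

(* The curve running through the consecutive arcs of the walk w0 :: l, the
   i-th arc being traversed for parameters in [i, i + 1].  An arc a -> b is
   the function f a b on [0, 1]; pf w is the value at the vertex w. *)
Fixpoint concat_curve (V : Type) (f : V -> V -> R -> R) (pf : V -> R)
    (w0 : V) (l : seq V) (s : R) : R :=
  match l with
  | [::] => pf w0
  | w1 :: l' => if Rle_dec s 1 then f w0 w1 s else concat_curve f pf w1 l' (s - 1)
  end.

Definition arc_family (V : Type) (E : rel V) (f : V -> V -> R -> R) (pf : V -> R) :=
  forall a b, E a b -> continuity (f a b) /\ f a b 0 = pf a /\ f a b 1 = pf b.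

Section ConcatCurve.
Variables (V : Type) (E : rel V) (f : V -> V -> R -> R) (pf : V -> R).
Hypothesis arcs : arc_family E f pf.

Lemma concat_curve_start w l : path E w l -> concat_curve f pf w l 0 = pf w.
Proof.
case: l => [|w1 l] //= /andP [Hw _].
by case: Rle_dec => /= [_|?]; [exact: (proj1 (proj2 (arcs Hw))) | lra].
Qed.

Lemma concat_curve_cont w l : path E w l -> continuity (concat_curve f pf w l).
Proof.
elim: l w => [|w1 l IH] w /=; first by move=> _; apply: continuity_const => ? ?.
move=> /andP [Hw Hl]; have [Cf [_ Hend]] := arcs Hw.
by apply: continuity_glue => //; [exact: IH | rewrite Hend concat_curve_start].
Qed.

Lemma concat_curve_end w l : path E w l ->
  concat_curve f pf w l (INR (size l)) = pf (last w l).
Proof.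
elim: l w => [|w1 l IH] w // /andP [Hw Hl]; rewrite [size _]/= S_INR /=.
have [_ [_ Hend]] := arcs Hw.
case: Rle_dec => /= [Hle|_]; last by rewrite Rplus_minus_r; exact: IH.
have Hsize : size l = 0%N by apply: INR_eq; have := pos_INR (size l); simpl; lra.
by case: l Hsize IH Hl Hle => //= _ _ _ _; rewrite Rplus_0_l.
Qed.

Lemma concat_curve_last_arc w q v : path E w (rcons q v) ->
  forall s, INR (size q) <= s <= INR (size q) + 1 ->
  concat_curve f pf w (rcons q v) s = f (last w q) v (s - INR (size q)).
Proof.
elim: q w => [|x q IH] w.
  by move=> _ s Hs /=; case: Rle_dec => /= ?; [rewrite Rminus_0_r | simpl in Hs; lra].
rewrite rcons_cons [size _]/= S_INR => /andP [Hwx Hq] s Hs /=.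
case: Rle_dec => /= Hs1; last by rewrite IH; [congr f; ring | | lra].
have Hsize : size q = 0%N by apply: INR_eq; have := pos_INR (size q); simpl; lra.
case: q Hsize IH Hq Hs Hs1 => //= _ _ /andP [Hxv _] Hs Hs1.
have -> : s = 1 by lra.
by rewrite (_ : 1 - (0 + 1) = 0) ?(proj2 (proj2 (arcs Hwx))) ?(proj1 (proj2 (arcs Hxv))) //; ring.
Qed.

End ConcatCurve.

Lemma INR_size_rcons (T : Type) (q : seq T) (x : T) :
  INR (size (rcons q x)) = INR (size q) + 1.
Proof. by rewrite size_rcons S_INR. Qed.

Lemma finite_common_bound (T : finType) (P : T -> R -> Prop) :
  (forall x B B', P x B -> B <= B' -> P x B') -> (forall x, exists B, P x B) ->
  exists B, forall x, P x B.
Proof.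
move=> Hmono Hex.
suff [B HB] : exists B, forall x, x \in enum T -> P x B.
  by exists B => x; apply: HB; rewrite mem_enum.
elim: (enum T) => [|y l [B HB]]; first by exists 0.
have [By HBy] := Hex y.
exists (Rmax B By) => x; rewrite in_cons => /orP [/eqP ->|Hx].
  exact: Hmono HBy (Rmax_r _ _).
exact: Hmono (HB _ Hx) (Rmax_l _ _).
Qed.

Lemma continuity_bounded_unit (f : R -> R) : continuity f ->
  exists B, forall t, 0 <= t <= 1 -> Rabs (f t) <= B.
Proof.
move=> Hf.
have Habs c : 0 <= c <= 1 -> continuity_pt (fun t => Rabs (f t)) c.
  by move=> _; exact: continuity_comp (Hf) (Rcontinuity_abs) c.
by have [M [HM _]] := @continuity_ab_maj _ 0 1 ltac:(lra) Habs; exists (Rabs (f M)).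
Qed.

Section UpwardDrawing.
Variables (V : finType) (E : rel V) (D : upward_planar_drawing E).

Definition height (w : V) : R := snd (Defs.pos D w).

Lemma arc_rises a b : E a b -> height a < height b.
Proof.
move=> Hab; rewrite /height -(curve_start D Hab) -(curve_end D Hab) /=.
by apply: (curve_upward D Hab); lra.
Qed.

Lemma path_rises x p : path E x p -> forall w, w \in p -> height x < height w.
Proof.
elim: p x => [|y p IH] x //= /andP [Hxy Hp] w; rewrite in_cons => /orP [/eqP ->|Hw].
  exact: arc_rises.
exact: Rlt_trans (arc_rises Hxy) (IH _ Hp _ Hw).
Qed.

(* In an upward drawing the unique source reaches every vertex: walking
   backwards along incoming arcs strictly decreases the set of vertices
   lying below, so the walk must stop, and it can only stop at the source. *)
Lemma source_reaches_all s0 : (forall w, indeg E w = 0%N -> w = s0) ->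
  forall w, connect E s0 w.
Proof.
move=> Hsrc.
pose below x := [set y | is_left (Rlt_dec (height y) (height x))].
have belowP y x : reflect (height y < height x) (y \in below x).
  by rewrite inE; case: Rlt_dec => h; constructor.
have has_pred x : indeg E x != 0%N -> exists y, E y x.
  by rewrite -lt0n => /card_gt0P [y Hy]; exists y; rewrite inE in Hy.
suff reach n x : (#|below x| <= n)%N -> connect E s0 x by move=> w; exact: reach _ _ (leqnn _).
elim: n x => [|n IH] x Hn; have [/Hsrc ->|/has_pred [y Hyx]] := eqVneq (indeg E x) 0%N;
  try exact: connect0.
all: have Hy : y \in below x by apply/belowP; exact: arc_rises.
- by move: Hn; rewrite leqn0 => /eqP /cards0_eq Hnil; rewrite Hnil inE in Hy.
- have Hproper : below y \proper below x.
    apply/properP; split; last by exists y => //; apply/belowP; exact: Rlt_irrefl.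
    by apply/subsetP => z /belowP Hz; apply/belowP; exact: Rlt_trans Hz (arc_rises Hyx).
  apply: connect_trans (IH y _) (connect1 Hyx).
  by rewrite -ltnS; exact: leq_trans (proper_card Hproper) Hn.
Qed.

(* Two vertices reachable from s0 are ends of two paths from a common vertex c
   that share no vertex other than c: take for c the highest vertex common to
   two paths from s0, and follow both paths from c. *)
Lemma common_ancestor_paths s0 u u' : (forall w, connect E s0 w) ->
  exists c q1 q2, path E c q1 /\ last c q1 = u /\ path E c q2 /\ last c q2 = u' /\
    forall w, w \in c :: q1 -> w \in c :: q2 -> w = c.
Proof.
move=> Hreach.
have /connectP [p1 Hp1 Hl1] := Hreach u.
have /connectP [p2 Hp2 Hl2] := Hreach u'.
pose common := [seq w <- s0 :: p1 | w \in s0 :: p2].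
have [c [Hc Hhighest]] := @seq_argmax _ height common s0 ltac:(by rewrite mem_filter !mem_head).
move: Hc; rewrite mem_filter => /andP [Hc2 Hc1].
have [q1 [Hq1 [Hm1 Hsub1]]] := suffix_path Hc1 Hp1.
have [q2 [Hq2 [Hm2 Hsub2]]] := suffix_path Hc2 Hp2.
exists c, q1, q2; rewrite Hm1 Hm2 -Hl1 -Hl2; do 4 split => //.
move=> w Hw1 Hw2; apply/eqP; apply: contraT => Hwc.
have /Hhighest : w \in common by rewrite mem_filter (Hsub1 _ Hw1) (Hsub2 _ Hw2).
move: Hw1; rewrite in_cons (negbTE Hwc) /= => /(path_rises Hq1); lra.
Qed.

Definition chain_x : V -> seq V -> R -> R := concat_curve (cx D) (fun w => fst (Defs.pos D w)).
Definition chain_y : V -> seq V -> R -> R := concat_curve (cy D) height.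

Lemma arcs_x : arc_family E (cx D) (fun w => fst (Defs.pos D w)).
Proof.
move=> a b Hab; split; first by move=> t; exact: cx_cont.
by rewrite -(curve_start D Hab) -(curve_end D Hab).
Qed.

Lemma arcs_y : arc_family E (cy D) height.
Proof.
move=> a b Hab; split; first by move=> t; exact: cy_cont.
by rewrite /height -(curve_start D Hab) -(curve_end D Hab).
Qed.

Lemma chain_start w l : path E w l ->
  chain_x w l 0 = fst (Defs.pos D w) /\ chain_y w l 0 = height w.
Proof.
by move=> Hp; rewrite /chain_x /chain_y (concat_curve_start arcs_x Hp) (concat_curve_start arcs_y Hp).
Qed.

Lemma chain_end w l : path E w l ->
  chain_x w l (INR (size l)) = fst (Defs.pos D (last w l)) /\
  chain_y w l (INR (size l)) = height (last w l).
Proof.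
by move=> Hp; rewrite /chain_x /chain_y (concat_curve_end arcs_x Hp) (concat_curve_end arcs_y Hp).
Qed.

Lemma chain_last_arc w q v : path E w (rcons q v) ->
  forall s, INR (size q) <= s <= INR (size q) + 1 ->
  chain_x w (rcons q v) s = cx D (last w q) v (s - INR (size q)) /\
  chain_y w (rcons q v) s = cy D (last w q) v (s - INR (size q)).
Proof.
move=> Hp s Hs; rewrite /chain_x /chain_y.
by rewrite (concat_curve_last_arc arcs_x Hp Hs) (concat_curve_last_arc arcs_y Hp Hs).
Qed.

Lemma chain_x_cont w l : path E w l -> continuity (chain_x w l).
Proof. exact: (concat_curve_cont arcs_x). Qed.

Lemma chain_y_cont w l : path E w l -> continuity (chain_y w l).
Proof. exact: (concat_curve_cont arcs_y). Qed.

Lemma chain_y_increasing w l : path E w l -> increasing_on (chain_y w l) (INR (size l)).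
Proof.
elim: l w => [|w1 l IH] w; first by move=> _ s t /= ? ? ?; lra.
move=> /andP [Hw Hl]; have [_ [_ Hend]] := arcs_y Hw.
rewrite [size _]/= S_INR => s t Hs Hst Ht; rewrite /chain_y /=.
case: Rle_dec => /= Hs1; case: Rle_dec => /= Ht1; try lra.
- exact: (curve_upward D Hw).
- have Hlow : cy D w w1 s <= cy D w w1 1.
    have [?|->] := Rle_lt_or_eq_dec _ _ Hs1; last exact: Rle_refl.
    by left; apply: (curve_upward D Hw); lra.
  have := IH _ Hl 0 (t - 1) ltac:(lra) ltac:(lra) ltac:(lra).
  by rewrite /chain_y (concat_curve_start arcs_y Hl) -Hend; lra.
- by apply: IH => //; lra.
Qed.

Lemma chain_point_cases w0 l s : path E w0 l -> 0 <= s <= INR (size l) ->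
  (exists w, w \in w0 :: l /\
     chain_x w0 l s = fst (Defs.pos D w) /\ chain_y w0 l s = height w) \/
  (exists a b t, a \in w0 :: l /\ b \in w0 :: l /\ E a b /\ 0 < t < 1 /\
     chain_x w0 l s = cx D a b t /\ chain_y w0 l s = cy D a b t /\
     forall w, w \in w0 :: l -> ~ (height a < height w < height b)).
Proof.
elim: l w0 s => [|w1 l IH] w0 s; first by move=> _ _; left; exists w0; rewrite mem_head.
move=> Hp; have /andP [Hw Hl] := Hp.
rewrite [size _]/= S_INR /chain_x /chain_y /= => Hs.
have [_ [Hx0 Hx1]] := arcs_x Hw; have [_ [Hy0 Hy1]] := arcs_y Hw.
case: Rle_dec => /= Hs1.
  have [->|Hs0] := Req_dec s 0; first by left; exists w0; rewrite mem_head.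
  have [->|Hs1'] := Req_dec s 1.
    by left; exists w1; rewrite !in_cons eqxx orbT.
  right; exists w0, w1, s; rewrite mem_head !in_cons eqxx orbT; do 4 split => //; first lra.
  do 2 split => //; move=> w; rewrite !in_cons => /orP [/eqP ->|/orP [/eqP ->|Hwl]]; try lra.
  by have := path_rises Hl Hwl; lra.
have [[w [Hwl Hwpos]]|[a [b [t [Ha [Hb [Hab [Ht [Hx [Hy Hgap]]]]]]]]]] :=
  IH w1 (s - 1) Hl ltac:(lra).
  by left; exists w; rewrite in_cons Hwl orbT.
right; exists a, b, t; rewrite in_cons Ha orbT in_cons Hb orbT.
do 4 split => //; split; [exact: Hx | split; [exact: Hy |]].
move=> w; rewrite in_cons => /orP [/eqP ->|]; last exact: Hgap.
by have := path_rises Hp Ha; lra.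
Qed.

Lemma chain_on_drawing w0 l s : path E w0 l -> 0 <= s <= INR (size l) ->
  on_drawing D (chain_x w0 l s, chain_y w0 l s).
Proof.
move=> Hp Hs.
case: (chain_point_cases Hp Hs) => [[w [_ [-> ->]]]|[a [b [t [_ [_ [Hab [Ht [-> [-> _]]]]]]]]]].
  by left; exists w; rewrite /height; case: (Defs.pos D w).
by right; exists a, b, t; do 2 split => //; lra.
Qed.

Lemma drawing_bounded : exists B, forall z, on_drawing D z ->
  Rabs (fst z) <= B /\ Rabs (snd z) <= B.
Proof.
have [B1 HB1] := @finite_common_bound V
  (fun w B => Rabs (fst (Defs.pos D w)) <= B /\ Rabs (snd (Defs.pos D w)) <= B)
  ltac:(by move=> x B B' [? ?] ?; split; lra)
  (fun w => ex_intro _ _ (conj (Rmax_l _ _) (Rmax_r _ _))).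
pose arc_bounded (p : V * V) B := E p.1 p.2 -> forall t, 0 <= t <= 1 ->
  Rabs (cx D p.1 p.2 t) <= B /\ Rabs (cy D p.1 p.2 t) <= B.
have each_arc_bounded p : exists B, arc_bounded p B.
  case: p => a b; case: (boolP (E a b)) => Hab; last by exists 0 => /= H; rewrite H in Hab.
  have [Bx HBx] := continuity_bounded_unit (fun t => cx_cont D t Hab).
  have [By HBy] := continuity_bounded_unit (fun t => cy_cont D t Hab).
  exists (Rmax Bx By) => _ t Ht; split.
  - exact: Rle_trans (HBx t Ht) (Rmax_l _ _).
  - exact: Rle_trans (HBy t Ht) (Rmax_r _ _).
have [B2 HB2] := @finite_common_bound _ arc_bounded
  ltac:(by move=> x B B' Hx ? Hp t Ht; have [? ?] := Hx Hp t Ht; split; lra)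
  each_arc_bounded.
exists (Rmax B1 B2) => z [[w ->]|[a [b [t [Hab [Ht ->]]]]]].
  by have [? ?] := HB1 w; split; apply: Rle_trans (Rmax_l _ _).
by have [? ?] := HB2 (a, b) Hab t Ht; split; apply: Rle_trans (Rmax_r _ _).
Qed.

(* Arc u -> v arrives at v to the left (sg = 1) or to the right (sg = -1)
   of arc u' -> v: horizontally ordered just below v, up to the sign sg. *)
Definition arrives_beside (sg : R) (u u' v : V) : Prop :=
  exists d, 0 < d /\ forall y s t, height v - d < y < height v ->
    0 <= s <= 1 -> 0 <= t <= 1 -> cy D u v s = y -> cy D u' v t = y ->
    sg * cx D u v s < sg * cx D u' v t.

Lemma in_left_of_arrives_beside u u' v :
  in_left_of D v u u' -> arrives_beside 1 u u' v.
Proof.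
move=> [d [Hd Hleft]]; exists d; split => // y s t Hy Hs Ht Hsy Hty.
by rewrite !Rmult_1_l; exact: (Hleft y s t Hy Hs Ht Hsy Hty).
Qed.

Lemma in_right_of_arrives_beside u u' v :
  in_left_of D v u' u -> arrives_beside (-1) u u' v.
Proof.
move=> [d [Hd Hleft]]; exists d; split => // y s t Hy Hs Ht Hsy Hty.
by have := Hleft y t s Hy Ht Hs Hty Hsy; lra.
Qed.

(* The face on the right (sg = 1) or left (sg = -1) of arc u -> v is the
   outer face. *)
Definition side_face_outer (sg : R) (u v : V) : Prop :=
  exists t d, 0 < t < 1 /\ 0 < d /\ forall eps, 0 < eps < d ->
    in_outer_face D (cx D u v t + sg * eps, cy D u v t).

Lemma right_face_outer_side u v : right_face_outer D u v -> side_face_outer 1 u v.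
Proof.
move=> [t [d [Ht [Hd Hout]]]]; exists t, d; do 2 split => //.
by move=> eps Heps; rewrite Rmult_1_l; exact: Hout.
Qed.

Lemma left_face_outer_side u v : left_face_outer D u v -> side_face_outer (-1) u v.
Proof.
move=> [t [d [Ht [Hd Hout]]]]; exists t, d; do 2 split => //.
by move=> eps Heps; rewrite (_ : cx D u v t + -1 * eps = cx D u v t - eps); [exact: Hout | ring].
Qed.

Section TwoChains.
Variables (c u u' v : V) (q1 q2 : seq V).
Hypotheses (path1 : path E c q1) (last1 : last c q1 = u).
Hypotheses (path2 : path E c q2) (last2 : last c q2 = u').
Hypotheses (arc1 : E u v) (arc2 : E u' v) (distinct_last : u' <> u).
Hypothesis only_c_shared : forall w, w \in c :: q1 -> w \in c :: q2 -> w = c.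

Local Notation x1 := (chain_x c (rcons q1 v)).
Local Notation y1 := (chain_y c (rcons q1 v)).
Local Notation x2 := (chain_x c (rcons q2 v)).
Local Notation y2 := (chain_y c (rcons q2 v)).
Local Notation n1 := (INR (size q1)).
Local Notation n2 := (INR (size q2)).

Lemma chain1_path : path E c (rcons q1 v).
Proof. by rewrite rcons_path path1 last1 arc1. Qed.

Lemma chain2_path : path E c (rcons q2 v).
Proof. by rewrite rcons_path path2 last2 arc2. Qed.

Lemma chains_share_ends w : w \in c :: rcons q1 v -> w \in c :: rcons q2 v ->
  w = c \/ w = v.
Proof.
rewrite !in_cons !mem_rcons !in_cons.
have [->|Hwc] := eqVneq w c; first by left.
have [->|Hwv] := eqVneq w v; first by right.
by move=> /= H1 H2; left; apply: only_c_shared; rewrite in_cons ?H1 ?H2 orbT.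
Qed.

(* If the last arc of c ~> w -> v is the arc c -> v itself, then w = c: any
   other w would lie strictly between c and v in height. *)
Lemma last_arc_from_start q w : path E c q -> last c q = w -> E w v ->
  (forall z, z \in c :: rcons q v -> ~ (height c < height z < height v)) -> w = c.
Proof.
move=> Hq Hlast Hwv Hgap; apply/eqP; apply: contraT => Hwc; case: (Hgap w).
  have := mem_last c q; rewrite Hlast !in_cons mem_rcons in_cons.
  by case/orP => ->; rewrite ?orbT.
split; last exact: arc_rises.
have : last c q \in c :: q by exact: mem_last.
by rewrite Hlast in_cons (negbTE Hwc) => /(path_rises Hq).
Qed.

(* The two chains are internally disjoint plane curves: a common interior
   point would be a common vertex (hence c or v, excluded by height), a vertex
   inside an arc (excluded by the drawing), or interior to a common arc, which
   would have to be c -> v and then force u = c = u'. *)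
Lemma chains_interiors_disjoint s t : 0 < s < n1 + 1 -> 0 < t < n2 + 1 ->
  x1 s = x2 t -> y1 s = y2 t -> False.
Proof.
move=> Hs Ht Hx Hy.
have Hbetween : height c < y1 s < height v.
  have [_ <-] := chain_start chain1_path.
  have [_] := chain_end chain1_path; rewrite last_rcons INR_size_rcons => <-.
  have := chain_y_increasing chain1_path; rewrite INR_size_rcons => Hincr.
  by split; apply: Hincr; lra.
case: (chain_point_cases chain1_path (s := s) ltac:(rewrite INR_size_rcons; lra))
  => [[w1 [Hw1 [X1 Y1]]]|[a [b [t1 [Ha [Hb [Hab [Ht1 [X1 [Y1 Hgap1]]]]]]]]]];
case: (chain_point_cases chain2_path (s := t) ltac:(rewrite INR_size_rcons; lra))
  => [[w2 [Hw2 [X2 Y2]]]|[a' [b' [t2 [Ha' [Hb' [Hab' [Ht2 [X2 [Y2 Hgap2]]]]]]]]]].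
- have Ew : w1 = w2.
    apply: (@Defs.pos_inj _ _ D); apply: injective_projections; first by rewrite -X1 -X2.
    by move: Y1 Y2; rewrite /height Hy => <- <-.
  subst w2; case: (chains_share_ends Hw1 Hw2) => Ew; rewrite Y1 Ew in Hbetween; lra.
- apply: (@curve_avoids_vertices _ _ D _ _ _ w1 Hab' Ht2).
  by rewrite -X2 -Y2 -Hx -Hy X1 Y1 /height; case: (Defs.pos D w1).
- apply: (@curve_avoids_vertices _ _ D _ _ _ w2 Hab Ht1).
  by rewrite -X1 -Y1 Hx Hy X2 Y2 /height; case: (Defs.pos D w2).
- have [[Ea Eb]|Hdiff] := eqVneq (a, b) (a', b'); last first.
    apply: (@curves_disjoint _ _ D _ _ _ _ _ _ Hab Hab' _ Ht1 Ht2).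
      by move=> Eab; rewrite Eab eqxx in Hdiff.
    by rewrite -X1 -Y1 -X2 -Y2 Hx Hy.
  subst a' b'.
  have Hinside : height a < y1 s < height b.
    rewrite Y1 /height -(curve_start D Hab) -(curve_end D Hab) /=.
    by split; apply: (curve_upward D Hab); lra.
  have Eac : a = c by case: (chains_share_ends Ha Ha') => // Eav; subst a; lra.
  have Ebv : b = v by case: (chains_share_ends Hb Hb') => // Ebc; subst b; lra.
  subst a b; apply: distinct_last.
  by rewrite (last_arc_from_start path2 last2 arc2 Hgap2) (last_arc_from_start path1 last1 arc1 Hgap1).
Qed.

Variable sg : R.
Hypothesis sg_unit : sg = 1 \/ sg = -1.
Hypothesis beside : arrives_beside sg u u' v.

(* Near v both chains run along their last arcs, so they are ordered there
   as the arcs u -> v and u' -> v are. *)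
Lemma chains_ordered_below_top :
  exists d, 0 < d /\ forall s t, 0 <= s <= n1 + 1 -> 0 <= t <= n2 + 1 ->
     y1 (n1 + 1) - d < y1 s < y1 (n1 + 1) -> y2 t = y1 s ->
     sg * x1 s < sg * x2 t.
Proof.
have [d [Hd Hleft]] := beside.
have I1 := chain_y_increasing chain1_path; rewrite INR_size_rcons in I1.
have I2 := chain_y_increasing chain2_path; rewrite INR_size_rcons in I2.
have [_ Hend] := chain_end chain1_path; rewrite last_rcons INR_size_rcons in Hend.
have Hu : y1 n1 = height u.
  have [_ ->] := chain_last_arc chain1_path (s := n1) ltac:(have := pos_INR (size q1); lra).
  by rewrite Rminus_diag last1; have [_ [-> _]] := arcs_y arc1.
have Hu' : y2 n2 = height u'.
  have [_ ->] := chain_last_arc chain2_path (s := n2) ltac:(have := pos_INR (size q2); lra).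
  by rewrite Rminus_diag last2; have [_ [-> _]] := arcs_y arc2.
have := arc_rises arc1; have := arc_rises arc2 => Hu'v Huv.
pose d' := Rmin d (Rmin (height v - height u) (height v - height u')).
have Hd' : d' <= d /\ d' <= height v - height u /\ d' <= height v - height u'.
  by rewrite /d'; have := Rmin_l d (Rmin (height v - height u) (height v - height u'));
     have := Rmin_r d (Rmin (height v - height u) (height v - height u'));
     have := Rmin_l (height v - height u) (height v - height u');
     have := Rmin_r (height v - height u) (height v - height u'); lra.
exists d'; split; first by apply: Rmin_pos => //; apply: Rmin_pos; lra.
move=> s t Hs Ht Hys Hyt; rewrite Hend in Hys.
have Hs1 : n1 <= s.
  have [//|Hlt] := Rle_lt_dec n1 s.
  by have := I1 s n1 (proj1 Hs) Hlt ltac:(lra); lra.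
have Ht1 : n2 <= t.
  have [//|Hlt] := Rle_lt_dec n2 t.
  by have := I2 t n2 (proj1 Ht) Hlt ltac:(lra); lra.
have [-> Ey1] := chain_last_arc chain1_path (s := s) ltac:(lra).
have [-> Ey2] := chain_last_arc chain2_path (s := t) ltac:(lra).
rewrite last1 last2 in Ey1 Ey2 *; apply: (Hleft (y1 s)); try lra; by rewrite -?Hyt.
Qed.

Lemma sign_involutive a : sg * (sg * a) = a.
Proof. by rewrite -Rmult_assoc; case: sg_unit => ->; ring. Qed.

(* The two chains, with x-coordinates multiplied by sg, bound a bigon which
   traps every drawing-avoiding path starting just beside arc u -> v: the
   path ends horizontally between the two chains. *)
Lemma chains_trap t0 : 0 < t0 < 1 -> exists e0, 0 < e0 /\
  forall eps, 0 < eps < e0 ->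
  forall px py : R -> R, continuity px -> continuity py ->
    (px 0, py 0) = (cx D u v t0 + sg * eps, cy D u v t0) ->
    (forall r, 0 <= r <= 1 -> ~ on_drawing D (px r, py r)) ->
    exists t1 t2, 0 <= t1 <= n1 + 1 /\ 0 <= t2 <= n2 + 1 /\
      y1 t1 = py 1 /\ sg * x1 t1 < sg * px 1 < sg * x2 t2.
Proof.
move=> Ht0; have Hn1 := pos_INR (size q1); have Hn2 := pos_INR (size q2).
have I1 := chain_y_increasing chain1_path; rewrite INR_size_rcons in I1.
have I2 := chain_y_increasing chain2_path; rewrite INR_size_rcons in I2.
have [Sx1 Sy1] := chain_start chain1_path; have [Sx2 Sy2] := chain_start chain2_path.
have [Ex1 Ey1] := chain_end chain1_path; rewrite last_rcons INR_size_rcons in Ex1 Ey1.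
have [Ex2 Ey2] := chain_end chain2_path; rewrite last_rcons INR_size_rcons in Ex2 Ey2.
have [e0 [He0 Htrap]] := @bigon_trap (fun s => sg * x1 s) y1 (fun s => sg * x2 s) y2
  (n1 + 1) (n2 + 1) (fun a b => on_drawing D (sg * a, b)) ltac:(lra) ltac:(lra)
  (@continuity_scal _ sg (chain_x_cont chain1_path)) (chain_y_cont chain1_path)
  (@continuity_scal _ sg (chain_x_cont chain2_path)) (chain_y_cont chain2_path) I1 I2
  ltac:(by cbv beta; rewrite Sx1 Sx2) ltac:(by rewrite Sy1 Sy2)
  ltac:(by cbv beta; rewrite Ex1 Ex2) ltac:(by rewrite Ey1 Ey2)
  ltac:(move=> s t Hs Ht Hx Hy; apply: (chains_interiors_disjoint Hs Ht _ Hy);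
        exact: Rmult_eq_reg_l Hx ltac:(case: sg_unit => ->; lra))
  chains_ordered_below_top
  ltac:(move=> t Ht; cbv beta; rewrite sign_involutive;
        by apply: chain_on_drawing chain1_path _; rewrite INR_size_rcons; lra)
  ltac:(move=> t Ht; cbv beta; rewrite sign_involutive;
        by apply: chain_on_drawing chain2_path _; rewrite INR_size_rcons; lra)
  (n1 + t0) ltac:(lra).
exists e0; split => // eps Heps px py Cpx Cpy [Hpx0 Hpy0] Havoid.
have [Ex0 Ey0] := chain_last_arc chain1_path (s := n1 + t0) ltac:(lra).
rewrite last1 (_ : n1 + t0 - n1 = t0) in Ex0 Ey0; last ring.
apply: (Htrap eps Heps (fun r => sg * px r) py (@continuity_scal _ sg Cpx) Cpy).
- by rewrite Hpx0 Ex0 Rmult_plus_distr_l sign_involutive.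
- by rewrite Hpy0 Ey0.
- by move=> r Hr; rewrite sign_involutive; exact: Havoid.
Qed.

Lemma beside_last_arc_enclosed : ~ side_face_outer sg u v.
Proof.
move=> [t0 [d [Ht0 [Hd Houter]]]].
have [e0 [He0 Htrap]] := chains_trap Ht0.
have [B HB] := drawing_bounded.
set eps := Rmin e0 d / 2.
have Heps : 0 < eps < e0 /\ eps < d.
  by have := Rmin_l e0 d; have := Rmin_r e0 d; have := Rmin_pos _ _ He0 Hd; rewrite /eps; lra.
have [_ Hescape] := Houter eps ltac:(lra).
have [px [py [Cpx [Cpy [Hstart [Havoid Hfar]]]]]] := Hescape (2 * B + 1).
have [t1 [t2 [Ht1 [Ht2 [Hy [Hlo Hhi]]]]]] := Htrap eps (proj1 Heps) px py Cpx Cpy Hstart Havoid.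
have [Bx1 By1] := HB _ (chain_on_drawing chain1_path (s := t1) ltac:(rewrite INR_size_rcons; lra)).
have [Bx2 _] := HB _ (chain_on_drawing chain2_path (s := t2) ltac:(rewrite INR_size_rcons; lra)).
rewrite /= Hy in Bx1 By1 Bx2.
have Bpx : Rabs (px 1) <= B.
  move: Bx1 Bx2; case: sg_unit => Esg; rewrite Esg in Hlo Hhi; rewrite /Rabs;
  repeat case: Rcase_abs => ?; lra.
lra.
Qed.

End TwoChains.

Lemma arrival_side_not_outer s0 (sg : R) u u' v :
  (sg = 1 \/ sg = -1) -> (forall w, connect E s0 w) ->
  E u v -> E u' v -> u' <> u -> arrives_beside sg u u' v ->
  ~ side_face_outer sg u v.
Proof.
move=> Hsg Hreach Huv Hu'v Hne Hbeside.
have [c [q1 [q2 [Hq1 [L1 [Hq2 [L2 Hshared]]]]]]] := common_ancestor_paths u u' Hreach.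
exact: (beside_last_arc_enclosed Hq1 L1 Hq2 L2 Huv Hu'v Hne Hshared Hsg Hbeside).
Qed.

End UpwardDrawing.

Lemma single_source_unique (V : finType) (E : rel V) : single_source E ->
  exists s0, forall w, indeg E w = 0%N -> w = s0.
Proof.
move=> Hss; have /cards1P [s0 Hs0] : #|[set w | indeg E w == 0%N]| == 1%N by rewrite Hss.
exists s0 => w Hw; have : w \in [set w | indeg E w == 0%N] by rewrite inE Hw.
by rewrite Hs0 inE => /eqP.
Qed.

Theorem mainTheorem5 (V : finType) (E : rel V) :
  single_source E -> max_inout_deg_le2 E -> upward_planar E ->
  forall (D : upward_planar_drawing E) (u v : V), E u v -> ~ bad_wrt_outer D u v.
Proof.
move=> Hss _ _ D u v Huv.
have [s0 Hs0] := single_source_unique Hss.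
have Hreach := source_reaches_all D Hs0.
case=> [[_ [[_ [_ [u' [Hne [Hu'v Hleft]]]]] /right_face_outer_side Hface]]
      | [_ [[_ [_ [u' [Hne [Hu'v Hright]]]]] /left_face_outer_side Hface]]].
- apply: (arrival_side_not_outer (or_introl erefl) Hreach Huv Hu'v Hne _ Hface).
  exact: in_left_of_arrives_beside.
- apply: (arrival_side_not_outer (or_intror erefl) Hreach Huv Hu'v Hne _ Hface).
  exact: in_right_of_arrives_beside.
Qed.
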